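(* Let $\pi$ be a uniformizer of $K_P$ and $L/K_P$ a finite extension. The $\pi$-adic $1$-unit character $\langle\cdot\rangle_\pi:K_P^+\to U_P$ extends uniquely to a character $\langle\cdot\rangle_\pi\in\mathbf{S}_L$ (i.e. a character of $L^+$ in $\mathbf{S}_L$ whose restriction to $K_P^+$ is $\langle\cdot\rangle_\pi$) taking values in $U_{\mathbb{C}_P}$.
   Context: $P$ is a closed point of a smooth projective curve over a finite field of characteristic $p$, $K_P$ its completed function field with valuation $v_P$, $\mathbb{C}_P$ the completion of an algebraic closure of $K_P$. For a complete extension $L$, $L^+=L^\times/\mu_L$ ($\mu_L$ = roots of unity in $L$), $U_L$ the $1$-units of $L$, and $U_P=U_{K_P}$. The $\pi$-adic $1$-unit character is $\langle\alpha\rangle_\pi=\alpha/\pi^{v_P(\alpha)}\in U_P$ for $\alpha\in K_P^+$ (well defined on positive numbers). $\mathbf{S}_L$ is the group of homomorphisms $s:L^+\to\mathbb{C}_P^\times$ for which there exists $y(s)\in\mathbb{Z}_p$ with $s(u)=u^{y(s)}$ for all $u\in U_L$. *)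

From HB Require Import structures.
From mathcomp Require Import all_boot all_order all_algebra.
From mathcomp Require Import reals.
Set Implicit Arguments. Unset Strict Implicit. Unset Printing Implicit Defensive.
Import Order.TTheory GRing.Theory Num.Theory.
Local Open Scope ring_scope.

Section Defs.
Variables (R : realType) (C : fieldType) (abs : C -> R).

Definition nonarch_abs : Prop :=
  [/\ forall x, 0 <= abs x,
      forall x, abs x = 0 <-> x = 0,
      forall x y, abs (x * y) = abs x * abs y
    & forall x y, abs (x + y) <= Num.max (abs x) (abs y)].

Definition cauchy (u : nat -> C) : Prop :=
  forall e : R, 0 < e -> exists N, forall m n, (N <= m)%N -> (N <= n)%N ->
    abs (u m - u n) < e.

Definition converges_to (u : nat -> C) (l : C) : Prop :=
  forall e : R, 0 < e -> exists N, forall n, (N <= n)%N -> abs (u n - l) < e.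

Definition complete_in (S : {pred C}) : Prop :=
  forall u : nat -> C, (forall n, u n \in S) -> cauchy u ->
    exists2 l, l \in S & converges_to u l.

Definition is_subfield (S : {pred C}) : Prop :=
  0 \in S /\ 1 \in S /\
  (forall x y, x \in S -> y \in S -> x + y \in S) /\
  (forall x, x \in S -> - x \in S) /\
  (forall x y, x \in S -> y \in S -> x * y \in S) /\
  (forall x, x \in S -> x != 0 -> x^-1 \in S).

(* K is a local field of characteristic p (a completed function field K_P)
   for abs, with uniformizer pi *)
Definition local_field_with_unif (K : {pred C}) (pi : C) : Prop :=
  is_subfield K /\ complete_in K /\ pi \in K /\ 0 < abs pi /\ abs pi < 1 /\
  (forall x, x \in K -> x != 0 -> exists n : int, abs x = abs pi ^ n) /\
  (* finite residue field *)
  (exists s : seq C, (forall r, r \in s -> (r \in K) /\ abs r <= 1) /\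
     forall x, x \in K -> abs x <= 1 -> exists2 r, r \in s & abs (x - r) < 1).

Definition algebraic_over (K : {pred C}) (z : C) : Prop :=
  exists q : {poly C}, [/\ q != 0, q \is a polyOver K & root q z].

(* C is (a model of) the completion of an algebraic closure of K:
   C is complete and the elements algebraic over K are dense in C
   (algebraic closedness of C is part of its type below). *)
Definition completed_alg_closure (K : {pred C}) : Prop :=
  complete_in predT /\
  forall z, exists u : nat -> C, (forall n, algebraic_over K (u n)) /\ converges_to u z.

Definition finite_ext (K L : {pred C}) : Prop :=
  [/\ is_subfield L, {subset K <= L}
    & exists b : seq C, (forall x, x \in b -> x \in L) /\
        forall x, x \in L -> exists k : nat -> C,
          (forall i, k i \in K) /\ x = \sum_(i < size b) k i * b`_i].

Definition root_of_unity_in (S : {pred C}) (z : C) : Prop :=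
  z \in S /\ exists n, (0 < n)%N /\ z ^+ n = 1.

Definition one_unit_in (S : {pred C}) (u : C) : Prop :=
  u \in S /\ abs (u - 1) < 1.

(* p-adic integers as compatible residue systems y n in [0, p^n) *)
Definition Zp_elt (p : nat) (y : nat -> nat) : Prop :=
  forall n, (y n < p ^ n)%N /\ (y n.+1 %% p ^ n = y n)%N.

Definition padic_pow_is (u : C) (y : nat -> nat) (w : C) : Prop :=
  converges_to (fun n => u ^+ y n) w.

(* s : C -> C represents a character L^+ = L^x / mu_L -> C^x *)
Definition char_Lplus (L : {pred C}) (s : C -> C) : Prop :=
  [/\ forall x, x \in L -> x != 0 -> s x != 0,
      forall x y, x \in L -> y \in L -> x != 0 -> y != 0 -> s (x * y) = s x * s y
    & forall z, root_of_unity_in L z -> s z = 1].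

Definition in_S (p : nat) (L : {pred C}) (s : C -> C) : Prop :=
  char_Lplus L s /\
  exists y, Zp_elt p y /\ forall u, one_unit_in L u -> padic_pow_is u y (s u).

(* s restricted to K^+ is the pi-adic 1-unit character:
   for alpha = pi^n * zeta * u with zeta in mu_K and u in U_K, s alpha = u
   (u = <alpha>_pi, the 1-unit part of alpha / pi^(v_P alpha)) *)
Definition extends_angle (K : {pred C}) (pi : C) (s : C -> C) : Prop :=
  forall (alpha : C) (n : int) (zeta u : C),
    alpha \in K -> root_of_unity_in K zeta -> one_unit_in K u ->
    alpha = pi ^ n * zeta * u -> s alpha = u.

Definition values_in_one_units (L : {pred C}) (s : C -> C) : Prop :=
  forall x, x \in L -> x != 0 -> abs (s x - 1) < 1.

End Defs.

From HB Require Import structures.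
From mathcomp Require Import all_boot all_order all_algebra.
From mathcomp Require Import reals boolp classical_sets.
Set Implicit Arguments. Unset Strict Implicit. Unset Printing Implicit Defensive.
Import Order.TTheory GRing.Theory Num.Theory.
Local Open Scope ring_scope.

(* Every x in L^x has a power x^N = pi^k u with u a 1-unit: the value group of L
   is commensurable with |pi|^Z, since a K-linear relation among 1, x, ..., x^n
   has two terms of equal absolute value, and some power of every unit of L is a
   1-unit, since the residue field of L is finite.  In characteristic p the N-th
   roots of 1-units exist (C is algebraically closed) and are unique, so
   <x> := u^(1/N) is well defined; it is multiplicative, extends <.>_pi and has
   exponent the p-adic integer 1.  Conversely, a character s of S_L extending
   <.>_pi fixes 1 + pi, which forces its exponent to be 1; so s fixes the 1-units
   of L and kills pi, hence s x ^+ N = <x> ^+ N and s x = <x>. *)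

Lemma subfield_divring_closed (F : fieldType) (S : {pred F}) :
  is_subfield S -> GRing.divring_closed S.
Proof.
case=> S0 [S1 [SD [SN [SM SV]]]]; split=> // x y Sx Sy; first exact/SD/SN.
by apply: SM => //; have [->|/(SV _ Sy)] := eqVneq y 0; rewrite ?invr0.
Qed.

Lemma exists_ord_max d (T : orderType d) n (f : 'I_n -> T) (i0 : 'I_n) :
  exists j, forall i, (f i <= f j)%O.
Proof. by exists [arg max_(j > i0) f j]%O; case: arg_maxP => // j _ j_max i; apply: j_max. Qed.

Lemma root_of_unity_in1 (F : fieldType) (S : {pred F}) : 1 \in S -> root_of_unity_in S 1.
Proof. by split=> //; exists 1%N; rewrite expr1. Qed.

Definition in_span (F : fieldType) (K : {pred F}) (b : seq F) (x : F) :=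
  exists k : nat -> F, (forall i, k i \in K) /\ x = \sum_(i < size b) k i * b`_i.

Fixpoint combinations (R : semiRingType) (s w : seq R) : seq R :=
  if w is a :: w' then [seq r * a + t | r <- s, t <- combinations s w'] else [:: 0].

Lemma combinations_sum (R : semiRingType) (s w : seq R) (r : nat -> R) :
  (forall i, r i \in s) -> \sum_(i < size w) r i * w`_i \in combinations s w.
Proof.
elim: w r => [|a w IH] r r_s /=; first by rewrite big_ord0 mem_head.
rewrite big_ord_recl.
exact (allpairs_f (fun r t => r * a + t) (r_s 0%N) (IH _ (fun i => r_s i.+1))).
Qed.

Section SubfieldLinearAlgebra.
Variables (F : fieldType) (K : {pred F}).
Hypothesis K_subfield : is_subfield K.

HB.instance Definition _ :=
  GRing.isDivringClosed.Build F K (subfield_divring_closed K_subfield).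

Definition subfield_type := {x : F | x \in K}.
HB.instance Definition _ := [isSub for (@sval F (fun x => x \in K)) : subfield_type -> F].
HB.instance Definition _ := [Choice of subfield_type by <:].
HB.instance Definition _ := [SubChoice_isSubUnitRing of subfield_type by <:].
HB.instance Definition _ := [SubNzRing_isSubComNzRing of subfield_type by <:].
HB.instance Definition _ := [SubComUnitRing_isSubIntegralDomain of subfield_type by <:].
HB.instance Definition _ := [SubIntegralDomain_isSubField of subfield_type by <:].

(* Over the field [subfield_type], the matrix of coordinates of the [x i] has
   rank at most [size b] < [n], hence a nonzero left kernel. *)
Lemma span_dependent (b : seq F) n (x : 'I_n -> F) : (size b < n)%N ->
  (forall i, in_span K b (x i)) ->
  exists c : 'I_n -> F, [/\ forall i, c i \in K, exists i, c i != 0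
                          & \sum_i c i * x i = 0].
Proof.
move=> size_lt /choice[k k_spec].
pose A : 'M[subfield_type]_(n, size b) :=
  \matrix_(i, j) (Sub (k i j) (proj1 (k_spec i) j) : subfield_type).
have ker_neq0 : kermx A != 0.
  by rewrite -mxrank_eq0 mxrank_ker subn_eq0 -ltnNge (leq_ltn_trans (rank_leq_col A)).
have [v /sub_kermxP vA0 v_neq0] := rowV0Pn ker_neq0.
have [i0 vi0] : exists i, v 0 i != 0.
  apply/existsP; apply: contraNT v_neq0 => /existsPn v0.
  by apply/eqP/rowP => i; rewrite mxE; apply/eqP/negbNE/v0.
exists (fun i => val (v 0 i)); split; first by move=> i; exact: valP.
  by exists i0; rewrite fmorph_eq0.
under eq_bigr => i _ do rewrite (proj2 (k_spec i)) mulr_sumr.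
rewrite exchange_big big1 //= => j _; under eq_bigr do rewrite mulrA.
rewrite -mulr_suml.
have -> : \sum_i val (v 0 i) * k i j = val ((v *m A) 0 j).
  by rewrite mxE rmorph_sum; apply: eq_bigr => i _; rewrite rmorphM mxE.
by rewrite vA0 mxE rmorph0 mul0r.
Qed.

End SubfieldLinearAlgebra.

Section Ultrametric.
Variables (R : realType) (C : fieldType) (abs : C -> R).
Hypothesis Habs : nonarch_abs abs.

Lemma abs_ge0 x : 0 <= abs x. Proof. by case: Habs. Qed.
Lemma abs_eq0 x : abs x = 0 <-> x = 0. Proof. by case: Habs. Qed.
Lemma absM x y : abs (x * y) = abs x * abs y. Proof. by case: Habs. Qed.
Lemma absD_max x y : abs (x + y) <= Num.max (abs x) (abs y). Proof. by case: Habs. Qed.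

Lemma abs0 : abs 0 = 0. Proof. exact/abs_eq0. Qed.

Lemma abs_gt0 x : (0 < abs x) = (x != 0).
Proof.
rewrite lt_def abs_ge0 andbT; congr negb.
by apply/eqP/eqP => [/abs_eq0 | ->] //; exact: abs0.
Qed.

Lemma abs1 : abs 1 = 1.
Proof.
have a1_neq0 : abs 1 != 0 by rewrite gt_eqF // abs_gt0 oner_neq0.
by apply: (mulfI a1_neq0); rewrite -absM !mulr1.
Qed.

Lemma absX x n : abs (x ^+ n) = abs x ^+ n.
Proof. by elim: n => [|n IH]; rewrite ?abs1 // !exprS absM IH. Qed.

Lemma absN x : abs (- x) = abs x.
Proof.
have aN1 : abs (-1) = 1.
  apply/eqP; rewrite -(pexpr_eq1 (n := 2)) ?abs_ge0 //.
  by rewrite -absX sqrrN expr1n abs1.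
by rewrite -mulN1r absM aN1 mul1r.
Qed.

Lemma absB x y : abs (x - y) = abs (y - x).
Proof. by rewrite -absN opprB. Qed.

Lemma absV x : abs x^-1 = (abs x)^-1.
Proof.
have [->|x_neq0] := eqVneq x 0; first by rewrite invr0 abs0 invr0.
have ax_neq0 : abs x != 0 by rewrite gt_eqF // abs_gt0.
by apply: (mulfI ax_neq0); rewrite -absM !mulfV ?abs1.
Qed.

Lemma absD_lt x y e : abs x < e -> abs y < e -> abs (x + y) < e.
Proof. by move=> xe ye; apply: le_lt_trans (absD_max x y) _; rewrite gt_max xe ye. Qed.

Lemma absD_eq x y : abs y < abs x -> abs (x + y) = abs x.
Proof.
move=> yx; apply/eqP; rewrite eq_le; apply/andP; split.
  by apply: le_trans (absD_max x y) _; rewrite ge_max lexx ltW.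
have := absD_max (x + y) (- y); rewrite addrK absN le_max.
by case/orP=> // /(lt_le_trans yx); rewrite ltxx.
Qed.

Lemma abs_sum_lt I (r : seq I) (P : pred I) (F : I -> C) e : 0 < e ->
  (forall i, P i -> abs (F i) < e) -> abs (\sum_(i <- r | P i) F i) < e.
Proof.
move=> e_gt0 Fe; elim/big_rec: _ => [|i s Pi se]; first by rewrite abs0.
exact: absD_lt (Fe i Pi) se.
Qed.

Lemma abs_prod_lt1 (I : eqType) (r : seq I) (F : I -> C) :
  abs (\prod_(i <- r) F i) < 1 -> exists2 i, i \in r & abs (F i) < 1.
Proof.
move=> prod_lt1; apply/not_exists2P => F_ge1; move: prod_lt1; apply/negP.
rewrite -leNgt big_seq; elim/big_ind: _ => [|x y x1 y1|i ir]; first by rewrite abs1.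
  by rewrite absM mulr_ege1.
by case: (F_ge1 i) => [/(_ ir) | /negP]; rewrite // leNgt.
Qed.

Lemma vanishing_sum_abs_tie n (a : 'I_n -> C) :
  \sum_i a i = 0 -> (exists i, a i != 0) ->
  exists i j, [/\ i != j, a i != 0 & abs (a i) = abs (a j)].
Proof.
move=> sum0 [i0 ai0]; have [j j_max] := exists_ord_max (fun i => abs (a i)) i0.
have aj_gt0 : 0 < abs (a j) by apply: lt_le_trans (j_max i0); rewrite abs_gt0.
have [[i [ij aij]]|no_tie] := pselect (exists i, i != j /\ abs (a i) = abs (a j)).
  by exists i, j; rewrite -abs_gt0 aij.
have : abs (\sum_i a i) = abs (a j).
  rewrite (bigD1 j) //= absD_eq // abs_sum_lt // => i ij.
  by rewrite lt_neqAle j_max andbT; apply/eqP => aij; apply: no_tie; exists i.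
by rewrite sum0 abs0 => aj0; move: aj_gt0; rewrite -aj0 ltxx.
Qed.

Lemma abs_exprz x (k : int) : abs (x ^ k) = abs x ^ k.
Proof. by case: k => n; rewrite ?NegzE -?exprnN ?absV absX. Qed.

Definition integral (S : {pred C}) (z : C) := (z \in S) && (abs z <= 1).

Definition one_unit (w : C) := abs (w - 1) < 1.

Lemma one_unit_abs w : one_unit w -> abs w = 1.
Proof. by move=> w1; rewrite -[w](subrK 1) addrC absD_eq abs1. Qed.

Lemma one_unit_neq0 w : one_unit w -> w != 0.
Proof. by move/one_unit_abs => aw; rewrite -abs_gt0 aw ltr01. Qed.

Lemma one_unit1 : one_unit 1. Proof. by rewrite /one_unit subrr abs0. Qed.

Lemma one_unitM w v : one_unit w -> one_unit v -> one_unit (w * v).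
Proof.
move=> w1 v1; rewrite /one_unit.
have -> : w * v - 1 = w * (v - 1) + (w - 1) by rewrite mulrBr mulr1 addrA subrK.
by apply: absD_lt => //; rewrite absM one_unit_abs // mul1r.
Qed.

Lemma one_unitX w n : one_unit w -> one_unit (w ^+ n).
Proof. by move=> w1; elim: n => [|n IH]; rewrite ?one_unit1 // exprS one_unitM. Qed.

Lemma one_unitV w : one_unit w -> one_unit w^-1.
Proof.
move=> w1; rewrite /one_unit.
have -> : w^-1 - 1 = - (w - 1) / w by rewrite mulNr mulrBl mulfV ?one_unit_neq0 // mul1r opprB.
by rewrite absM absN absV (one_unit_abs w1) invr1 mulr1.
Qed.

Section CharP.
Variable p : nat.
Hypotheses (p_prime : prime p) (pC : p \in [pchar C]).

Lemma abs_natr_coprime m : ~~ (p %| m)%N -> abs (m%:R : C) = 1.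
Proof.
move=> p_ndvd_m.
have m_fermat : (m%:R : C) ^+ p = m%:R.
  by rewrite -natrX -(GRing.natr_mod_pchar pC) fermat_little // GRing.natr_mod_pchar.
have am_neq0 : abs (m%:R : C) != 0 by rewrite gt_eqF // abs_gt0 // -(dvdn_pcharf pC).
have p1_gt0 : (0 < p.-1)%N by rewrite -ltnS prednK ?prime_gt1 ?prime_gt0.
apply/eqP; rewrite -(pexpr_eq1 p1_gt0 (abs_ge0 _)); apply/eqP.
apply: (mulIf am_neq0); rewrite mul1r -exprSr prednK ?prime_gt0 //.
by rewrite -absX m_fermat.
Qed.

Lemma abs_geometric_sum t c : one_unit t -> ~~ (p %| c)%N ->
  abs (\sum_(i < c) t ^+ i) = 1.
Proof.
move=> t1 p_ndvd_c.
have -> : \sum_(i < c) t ^+ i = c%:R + \sum_(i < c) (t ^+ i - 1).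
  by rewrite sumrB sumr_const card_ord addrCA subrr addr0.
rewrite absD_eq // abs_natr_coprime // abs_sum_lt // => i _.
exact: one_unitX.
Qed.

(* [(1 + t) ^+ (c * p ^ j) = (1 + t ^+ (p ^ j)) ^+ c], and the geometric sum in
   [(1 + T) ^+ c - 1 = T * \sum_(i < c) (1 + T) ^+ i] has absolute value 1. *)
Lemma abs_expr1D_sub1 t b : abs t < 1 -> (0 < b)%N ->
  abs ((1 + t) ^+ b - 1) = abs t ^+ (p ^ logn p b).
Proof.
move=> t_lt1 b_gt0; have [c p_cop_c b_eq] := pfactor_coprime p_prime b_gt0.
set j := logn p b in b_eq *.
have frobenius_j : (1 + t) ^+ (p ^ j) = 1 + t ^+ (p ^ j).
  by rewrite exprDn_pchar ?expr1n // pnatX (pnatE _ p_prime) pC.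
have T1 : one_unit (1 + t ^+ (p ^ j)).
  by rewrite /one_unit (addrC 1) addrK absX exprn_ilt1 ?abs_ge0 // -lt0n expn_gt0 prime_gt0.
rewrite b_eq mulnC exprM frobenius_j subrX1 absM abs_geometric_sum -?prime_coprime //.
by rewrite (addrC 1) addrK absX mulr1.
Qed.

Lemma one_unit_expr_inj N w v : (0 < N)%N -> one_unit w -> one_unit v ->
  w ^+ N = v ^+ N -> w = v.
Proof.
move=> N_gt0 w1 v1 wv.
have v_neq0 := one_unit_neq0 v1.
have q1 : abs (w / v - 1) < 1 by apply: one_unitM; rewrite ?one_unitV.
have : abs ((1 + (w / v - 1)) ^+ N - 1) = 0.
  by rewrite (addrC 1) subrK expr_div_n wv divff ?subrr ?abs0 // expf_neq0.
rewrite abs_expr1D_sub1 // => /eqP; rewrite expf_eq0 => /andP[_ /eqP/abs_eq0/eqP].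
by rewrite subr_eq0 => /eqP wv1; rewrite -(divfK v_neq0 w) wv1 mul1r.
Qed.

Lemma abs_expr1D_sub t a b : abs t < 1 -> (a < b)%N ->
  abs ((1 + t) ^+ b - (1 + t) ^+ a) = abs t ^+ (p ^ logn p (b - a)).
Proof.
move=> t_lt1 ab; have u1 : one_unit (1 + t) by rewrite /one_unit (addrC 1) addrK.
have -> : (1 + t) ^+ b = (1 + t) ^+ a * (1 + t) ^+ (b - a) by rewrite -exprD subnKC // ltnW.
rewrite -{2}[(1 + t) ^+ a]mulr1 -mulrBr absM absX (one_unit_abs u1) expr1n mul1r.
by rewrite abs_expr1D_sub1 // subn_gt0.
Qed.

Lemma Zp_elt_one : Zp_elt p (fun n => (0 < n)%N : nat).
Proof.
have pn_gt1 n : (1 < p ^ n.+1)%N by rewrite -{1}(expn0 p) ltn_exp2l ?prime_gt1.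
by case=> [|n] /=; rewrite ?expn0 ?modn1 // modn_small ?pn_gt1.
Qed.

Lemma Zp_elt_modn y m n : Zp_elt p y -> (m <= n)%N -> (y n %% p ^ m)%N = y m.
Proof.
move=> y_Zp /subnK <-; elim: (n - m)%N => [|d IH].
  by rewrite add0n modn_small //; case: (y_Zp m).
rewrite addSn -IH; have [_ <-] := y_Zp (d + m)%N.
by rewrite modn_dvdm // dvdn_exp2l // leq_addl.
Qed.

(* If [y n] is not 1 modulo [p ^ m], then by [abs_expr1D_sub] the distance from
   [(1 + t) ^+ y n] to [1 + t] is at least [abs t ^+ (p ^ m)]. *)
Lemma Zp_elt_pow_fixed t y : t != 0 -> abs t < 1 -> Zp_elt p y ->
  padic_pow_is abs (1 + t) y (1 + t) -> forall m, (0 < m)%N -> y m = 1%N.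
Proof.
move=> t_neq0 t_lt1 y_Zp y_lim m m_gt0; apply/eqP/negPn/negP => ym_neq1.
have pm_gt1 : (1 < p ^ m)%N by rewrite -{1}(expn0 p) ltn_exp2l ?prime_gt1.
have e_gt0 : 0 < abs t ^+ (p ^ m) by rewrite exprn_gt0 // abs_gt0.
have [n0 n0_close] := y_lim _ e_gt0; set n := maxn n0 m.
have ynm := Zp_elt_modn y_Zp (leq_maxr n0 m); rewrite -/n in ynm.
have [d [d_gt0 d_ndvd d_abs]] : exists d, [/\ (0 < d)%N, ~~ (p ^ m %| d)%N &
    abs ((1 + t) ^+ y n - (1 + t)) = abs t ^+ (p ^ logn p d)].
  have [yn0|yn_gt1|yn1] := ltngtP (y n) 1.
  - exists 1%N; split; rewrite ?dvdn1 ?neq_ltn ?pm_gt1 ?orbT //.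
    move: yn0; rewrite ltnS leqn0 => /eqP ->.
    by have := abs_expr1D_sub t_lt1 (ltn0Sn 0); rewrite subn0 expr1 expr0 absB.
  - exists (y n - 1)%N; split; first by rewrite subn_gt0.
      by rewrite -eqn_mod_dvd ?ynm ?modn_small // ltnW.
    by have := abs_expr1D_sub t_lt1 yn_gt1; rewrite expr1.
  - by move: ym_neq1; rewrite -ynm yn1 modn_small ?eqxx.
have l_lt_m : (logn p d < m)%N.
  rewrite ltnNge; apply: contra d_ndvd => ml.
  exact: dvdn_trans (dvdn_exp2l p ml) (pfactor_dvdnn p d).
have := n0_close n (leq_maxl n0 m); rewrite d_abs ltNge => /negP; apply.
by apply: ler_wiXn2l; rewrite ?abs_ge0 ?(ltW t_lt1) // leq_exp2l ?prime_gt1 // ltnW.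
Qed.

End CharP.

Section FiniteExtension.
Variables (K L : {pred C}) (pi : C) (bs sr : seq C).
Hypotheses (K_subfield : is_subfield K) (L_subfield : is_subfield L).
Hypotheses (KL : {subset K <= L}) (L_span : forall x, x \in L -> in_span K bs x).
Hypotheses (pi_K : pi \in K) (pi_gt0 : 0 < abs pi).
Hypothesis K_discrete : forall x, x \in K -> x != 0 -> exists n : int, abs x = abs pi ^ n.
Hypothesis K_residues :
  forall x, x \in K -> abs x <= 1 -> exists2 r, r \in sr & abs (x - r) < 1.

HB.instance Definition _ :=
  GRing.isDivringClosed.Build C K (subfield_divring_closed K_subfield).
HB.instance Definition _ :=
  GRing.isDivringClosed.Build C L (subfield_divring_closed L_subfield).

Lemma value_group_commensurable x : x \in L -> x != 0 ->
  exists M (n : int), (0 < M)%N /\ abs x ^+ M = abs pi ^ n.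
Proof.
move=> xL x_neq0.
have X_neq0 : abs x != 0 by rewrite gt_eqF ?abs_gt0.
have pi_neq0 : abs pi != 0 by rewrite gt_eqF.
have ratio (i j : nat) (ni nj : int) : (i < j)%N ->
    abs pi ^ ni * abs x ^+ i = abs pi ^ nj * abs x ^+ j ->
    exists M (n : int), (0 < M)%N /\ abs x ^+ M = abs pi ^ n.
  move=> lt_ij e; exists (j - i)%N, (ni - nj); split; first by rewrite subn_gt0.
  have Xj : abs x ^+ j = abs x ^+ (j - i) * abs x ^+ i by rewrite -exprD subnK // ltnW.
  move: e; rewrite Xj mulrA => /(mulIf (expf_neq0 i X_neq0)) e.
  by rewrite expfzDr // e mulrAC -expfzDr // subrr expr0z mul1r.
have [c [cK [i0 ci0] sum0]] := span_dependent K_subfield (ltnSn (size bs))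
  (fun i : 'I_(size bs).+1 => L_span (rpredX i xL)).
have a_neq0 i : c i != 0 -> c i * x ^+ i != 0 by move=> ci; rewrite mulf_neq0 ?expf_neq0.
have [i [j [ij ai_neq0 aij]]] :=
  vanishing_sum_abs_tie (a := fun i => c i * x ^+ i) sum0 (ex_intro _ i0 (a_neq0 _ ci0)).
have ci_neq0 : c i != 0 by apply: contraNneq ai_neq0 => ->; rewrite mul0r.
have cj_neq0 : c j != 0.
  by apply: contraTneq (ai_neq0) => cj0; rewrite -abs_gt0 aij cj0 mul0r abs0 ltxx.
have [ni ci_abs] := K_discrete (cK i) ci_neq0.
have [nj cj_abs] := K_discrete (cK j) cj_neq0.
move: aij; rewrite !absM !absX ci_abs cj_abs.
case: (ltngtP i j) => [lt_ij|lt_ji|/val_inj eq_ij]; first exact: ratio.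
  by move/esym; apply: ratio.
by rewrite eq_ij eqxx in ij.
Qed.

(* The residues of [w] are linearly independent over the residue field of [K]. *)
Definition residually_free (w : seq C) :=
  all (integral L) w /\
  forall c : nat -> C, (forall i, integral K (c i)) ->
    (exists2 i, (i < size w)%N & abs (c i) = 1) ->
    1 <= abs (\sum_(i < size w) c i * w`_i).

Lemma residually_free_size w : residually_free w -> (size w <= size bs)%N.
Proof.
case=> /allP w_int w_free; rewrite leqNgt; apply/negP => size_lt.
have w_span (i : 'I_(size w)) : in_span K bs w`_i.
  by apply: L_span; have /andP[] := w_int _ (mem_nth 0 (ltn_ord i)).
have [c [cK [i1 ci1] sum0]] := span_dependent K_subfield size_lt w_span.
have [j j_max] := exists_ord_max (fun i => abs (c i)) i1.
have cj_gt0 : 0 < abs (c j) by apply: lt_le_trans (j_max i1); rewrite abs_gt0.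
pose c' i := if insub i is Some k then c k / c j else 0.
have sum'0 : \sum_(i < size w) c' i * w`_i = 0.
  transitivity ((\sum_i c i * w`_i) / c j); last by rewrite sum0 mul0r.
  by rewrite mulr_suml; apply: eq_bigr => i _; rewrite /c' valK mulrAC.
suff : 1 <= abs (\sum_(i < size w) c' i * w`_i) by rewrite sum'0 abs0 ler10.
apply: w_free => [i|]; last first.
  by exists j => //; rewrite /c' valK absM absV divff // gt_eqF.
rewrite /c' /integral; case: (insub i) => [k|]; last by rewrite rpred0 abs0 ler01.
by rewrite rpred_div ?cK //= absM absV ler_pdivrMr // mul1r j_max.
Qed.

Lemma exists_max_residually_free : exists2 w, residually_free w &
  forall w', residually_free w' -> (size w' <= size w)%N.
Proof.
pose has_free k := `[< exists w, residually_free w /\ size w = k >].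
have free_nil : has_free 0%N.
  by apply/asboolP; exists [::]; split=> //; split=> // c _ [].
have free_bounded k : has_free k -> (k <= size bs)%N.
  by move=> /asboolP[w [w_free <-]]; exact: residually_free_size.
have [k /asboolP[w [w_free <-]] w_max] := ex_maxnP (ex_intro has_free _ free_nil) free_bounded.
by exists w => // w' w'_free; apply: w_max; apply/asboolP; exists w'.
Qed.

Lemma residually_dependent_approx w z : residually_free w -> integral L z ->
  ~ residually_free (rcons w z) ->
  exists e : nat -> C, (forall i, integral K (e i)) /\
    abs (z - \sum_(i < size w) e i * w`_i) < 1.
Proof.
move=> [w_int w_free] z_int rcons_dep; set n := size w.
have [c [cK [i0 i0_le ci0] sum_lt]] : exists c : nat -> C, [/\ forall i, integral K (c i),
    exists2 i, (i < n.+1)%N & abs (c i) = 1 &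
    abs (\sum_(i < n) c i * w`_i + c n * z) < 1].
  have : ~ forall c : nat -> C, (forall i, integral K (c i)) ->
      (exists2 i, (i < size (rcons w z))%N & abs (c i) = 1) ->
      1 <= abs (\sum_(i < size (rcons w z)) c i * (rcons w z)`_i).
    by move=> rcons_free; apply: rcons_dep; rewrite /residually_free all_rcons z_int.
  rewrite -existsNP => -[c /not_implyP[cK /not_implyP[c_max /negP]]].
  rewrite -ltNge size_rcons big_ord_recr /= nth_rcons ltnn eqxx.
  by under eq_bigr => i _ do rewrite nth_rcons ltn_ord; exists c; rewrite size_rcons in c_max.
have cn_abs : abs (c n) = 1.
  apply/eqP; rewrite eq_le (andP (cK n)).2 leNgt; apply/negP => cn_lt1.
  have i0_lt : (i0 < n)%N.
    by rewrite ltn_neqAle -ltnS i0_le andbT; apply: contraTneq cn_lt1 => <-; rewrite ci0 ltxx.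
  have := w_free c cK (ex_intro2 _ _ i0 i0_lt ci0); rewrite leNgt => /negP; apply.
  rewrite -(addrK (c n * z) (\sum_(i < n) c i * w`_i)) absD_lt // absN absM.
  by apply: le_lt_trans cn_lt1; rewrite ler_piMr ?abs_ge0 // (andP z_int).2.
have cn_neq0 : c n != 0 by rewrite -abs_gt0 cn_abs.
exists (fun i => - c i / c n); split.
  move=> i; have /andP[ciK ci1] := cK i.
  rewrite /integral rpred_div ?rpredN ?(andP (cK n)).1 //=.
  by rewrite absM absN absV cn_abs invr1 mulr1.
have -> : z - \sum_(i < n) (- c i / c n) * w`_i = (\sum_(i < n) c i * w`_i + c n * z) / c n.
  rewrite mulrDl mulrAC divff // mul1r addrC mulr_suml -sumrN.
  by congr (_ + _); apply: eq_bigr => i _; rewrite !mulNr opprK mulrAC.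
by rewrite absM absV cn_abs invr1 mulr1.
Qed.

Lemma approx_by_residues w (e : nat -> C) z : all (integral L) w ->
  (forall i, integral K (e i)) -> abs (z - \sum_(i < size w) e i * w`_i) < 1 ->
  exists r : nat -> C, (forall i, r i \in sr) /\
    abs (z - \sum_(i < size w) r i * w`_i) < 1.
Proof.
move=> /allP w_int e_int z_close.
have /choice[r r_spec] : forall i, exists r, r \in sr /\ abs (e i - r) < 1.
  by move=> i; have /andP[eK e1] := e_int i; have [r] := K_residues eK e1; exists r.
exists r; split=> [i|]; first exact: (r_spec i).1.
have -> : z - \sum_(i < size w) r i * w`_i =
    (z - \sum_(i < size w) e i * w`_i) +
    (\sum_(i < size w) e i * w`_i - \sum_(i < size w) r i * w`_i).
  by rewrite addrA subrK.
rewrite -sumrB absD_lt // abs_sum_lt // => i _; rewrite -mulrBl absM.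
apply: le_lt_trans (r_spec i).2; rewrite ler_piMr ?abs_ge0 //.
by have /andP[] := w_int _ (mem_nth 0 (ltn_ord i)).
Qed.

(* The residues of a maximal residually free family span the residue field of
   [L] over the finite residue field of [K]. *)
Lemma residue_field_finite :
  exists F : seq C, forall z, integral L z -> exists2 f, f \in F & abs (z - f) < 1.
Proof.
have [w w_free w_max] := exists_max_residually_free.
exists (combinations sr w) => z z_int.
have rcons_dep : ~ residually_free (rcons w z) by move/w_max; rewrite size_rcons ltnn.
have [e [e_int e_close]] := residually_dependent_approx w_free z_int rcons_dep.
have [r [r_sr r_close]] := approx_by_residues w_free.1 e_int e_close.
by exists (\sum_(i < size w) r i * w`_i); first exact: combinations_sum.
Qed.

Lemma unit_expn_one_unit y : y \in L -> abs y = 1 -> exists2 M, (0 < M)%N & one_unit (y ^+ M).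
Proof.
move=> yL y1; have [F F_approx] := residue_field_finite.
have /choice[g g_spec] :
    forall i : 'I_(size F).+1, exists j : 'I_(size F), abs (y ^+ i - F`_j) < 1.
  move=> i; have [|f fF yf] := F_approx (y ^+ i).
    by rewrite /integral rpredX //= absX y1 expr1n.
  by exists (Ordinal (etrans (index_mem f F) fF)); rewrite nth_index.
have /injectivePn[i [j ij gij]] : ~~ injectiveb g.
  by apply/negP => /injectiveP/leq_card; rewrite !card_ord ltnn.
have close : abs (y ^+ i - y ^+ j) < 1.
  have -> : y ^+ i - y ^+ j = (y ^+ i - F`_(g i)) + (F`_(g j) - y ^+ j).
    by rewrite gij addrA subrK.
  by rewrite absD_lt // absB.
have power (a b : nat) : (a < b)%N -> abs (y ^+ a - y ^+ b) < 1 ->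
    exists2 M, (0 < M)%N & one_unit (y ^+ M).
  move=> ab yab; exists (b - a)%N; first by rewrite subn_gt0.
  move: yab; have -> : y ^+ b = y ^+ a * y ^+ (b - a) by rewrite -exprD subnKC // ltnW.
  by rewrite -{1}[y ^+ a]mulr1 -mulrBr absM absX y1 expr1n mul1r absB.
case: (ltngtP i j) => [lt_ij|lt_ji|/val_inj eq_ij]; first exact: power lt_ij close.
  by apply: power lt_ji _; rewrite absB.
by rewrite eq_ij eqxx in ij.
Qed.

Lemma angle_decomposition x : x \in L -> x != 0 ->
  exists N (k : int) u, [/\ (0 < N)%N, one_unit u & x ^+ N = pi ^ k * u].
Proof.
move=> xL x_neq0; have [M [n [M_gt0 xM]]] := value_group_commensurable xL x_neq0.
have pin_neq0 : pi ^ n != 0 by rewrite expfz_neq0 // -abs_gt0.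
pose y := x ^+ M / pi ^ n.
have yL : y \in L by apply: rpred_div; [exact: rpredX | exact/KL/rpredXz].
have y1 : abs y = 1.
  by rewrite absM absV absX abs_exprz xM divff // expfz_neq0 // gt_eqF.
have [M' M'_gt0 yM'] := unit_expn_one_unit yL y1.
exists (M * M')%N, (n * M'%:Z), (y ^+ M'); split => //; first by rewrite muln_gt0 M_gt0.
by rewrite exprM -[x ^+ M](divfK pin_neq0) exprMn mulrC exprnP exprz_exp.
Qed.

End FiniteExtension.

End Ultrametric.

Section ClosedField.
Variables (R : realType) (C : closedFieldType) (abs : C -> R).
Hypothesis Habs : nonarch_abs abs.

Lemma one_unit_root_exists u N : one_unit abs u -> (0 < N)%N ->
  exists2 w, one_unit abs w & w ^+ N = u.
Proof.
move=> u1 N_gt0; have [r r_roots] := closed_field_poly_normal ('X^N - u%:P).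
rewrite lead_coefXnsubC // scale1r in r_roots.
have : abs (\prod_(z <- r) (1 - z)) < 1.
  have -> : \prod_(z <- r) (1 - z) = ('X^N - u%:P).[1].
    by rewrite r_roots horner_prod; apply: eq_bigr => z _; rewrite hornerXsubC.
  by rewrite !hornerE expr1n (absB Habs).
case/(abs_prod_lt1 Habs) => z z_r z1; exists z; first by rewrite /one_unit (absB Habs).
have : root ('X^N - u%:P) z by rewrite r_roots root_prod_XsubC.
by rewrite /root !hornerE subr_eq0 => /eqP.
Qed.

End ClosedField.

Section AngleCharacter.
Variables (R : realType) (C : closedFieldType) (abs : C -> R) (p : nat).
Variables (K L : {pred C}) (pi : C).
Hypotheses (Habs : nonarch_abs abs) (p_prime : prime p) (pC : p \in [pchar C]).
Hypotheses (K_local : local_field_with_unif abs K pi) (L_finite : finite_ext K L).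

Let K_subfield : is_subfield K. Proof. by case: K_local. Qed.
Let L_subfield : is_subfield L. Proof. by case: L_finite. Qed.
Let KL : {subset K <= L}. Proof. by case: L_finite. Qed.
Let pi_K : pi \in K. Proof. by case: K_local => _ [_ []]. Qed.
Let pi_gt0 : 0 < abs pi. Proof. by case: K_local => _ [_ [_ []]]. Qed.
Let pi_lt1 : abs pi < 1. Proof. by case: K_local => _ [_ [_ [_ []]]]. Qed.
Let pi_neq0 : pi != 0. Proof. by rewrite -(abs_gt0 Habs). Qed.

HB.instance Definition _ :=
  GRing.isDivringClosed.Build C K (subfield_divring_closed K_subfield).
HB.instance Definition _ :=
  GRing.isDivringClosed.Build C L (subfield_divring_closed L_subfield).

Let decomposition x : x \in L -> x != 0 ->
  exists N (k : int) u, [/\ (0 < N)%N, one_unit abs u & x ^+ N = pi ^ k * u].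
Proof.
case: K_local => _ [_ [_ [_ [_ [K_discrete [sr [_ K_residues]]]]]]].
case: L_finite => _ _ [bs [_ L_span]].
exact: (angle_decomposition Habs K_subfield L_subfield KL L_span pi_K pi_gt0
  K_discrete K_residues).
Qed.

(* [is_angle x w] means [w = <x>_pi]. *)
Definition is_angle (x w : C) :=
  one_unit abs w /\ exists N (k : int), (0 < N)%N /\ x ^+ N = pi ^ k * w ^+ N.

Definition angle (x : C) : C := xget 1 (is_angle x).

Lemma pi_expz_one_unit_inj (a b : int) u v : one_unit abs u -> one_unit abs v ->
  pi ^ a * u = pi ^ b * v -> u = v.
Proof.
move=> u1 v1 e; have := congr1 abs e.
rewrite !(absM Habs) !(abs_exprz Habs) (one_unit_abs Habs u1) (one_unit_abs Habs v1) !mulr1.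
move/(ieexprIz pi_gt0 (negbT (lt_eqF pi_lt1))) => ab; rewrite ab in e.
by apply: mulfI e; rewrite expfz_neq0.
Qed.

Lemma is_angle_uniq x w v : is_angle x w -> is_angle x v -> w = v.
Proof.
have powM N (k : int) u M : x ^+ N = pi ^ k * u ^+ N ->
    x ^+ (N * M) = pi ^ (k * M%:Z) * u ^+ (N * M).
  by move=> xN; rewrite !exprM xN exprMn -exprz_exp.
move=> [w1 [N [k [N_gt0 xN]]]] [v1 [M [j [M_gt0 xM]]]].
have NM_gt0 : (0 < N * M)%N by rewrite muln_gt0 N_gt0.
apply: (one_unit_expr_inj Habs p_prime pC NM_gt0 w1 v1).
apply: (pi_expz_one_unit_inj (a := k * M%:Z) (b := j * N%:Z)); rewrite ?one_unitX //.
by rewrite -powM // mulnC -powM.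
Qed.

Lemma is_angle_exists x : x \in L -> x != 0 -> exists w, is_angle x w.
Proof.
move=> xL x_neq0; have [N [k [u [N_gt0 u1 xN]]]] := decomposition xL x_neq0.
have [w w1 wN] := one_unit_root_exists Habs u1 N_gt0.
by exists w; split=> //; exists N, k; rewrite wN.
Qed.

Lemma angleE x w : is_angle x w -> angle x = w.
Proof.
by move=> xw; apply: xget_unique => [|v xv]; [exact: xw | exact: is_angle_uniq xv xw].
Qed.

Lemma is_angleM x y w v : is_angle x w -> is_angle y v -> is_angle (x * y) (w * v).
Proof.
move=> [w1 [N [k [N_gt0 xN]]]] [v1 [M [j [M_gt0 yM]]]].
split; first exact: one_unitM.
exists (N * M)%N, (k * M%:Z + j * N%:Z); split; first by rewrite muln_gt0 N_gt0.
rewrite !exprMn [in LHS]exprM xN mulnC exprM yM !exprMn expfzDr // -!exprM.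
by rewrite -!exprz_exp -!exprnP mulnC mulrACA.
Qed.

Lemma is_angle_pi_root_unit (n : int) zeta u m : (0 < m)%N -> zeta ^+ m = 1 ->
  one_unit abs u -> is_angle (pi ^ n * zeta * u) u.
Proof.
move=> m_gt0 zeta_m u1; split=> //; exists m, (n * m%:Z); split=> //.
by rewrite !exprMn zeta_m mulr1 exprnP exprz_exp.
Qed.

Lemma angle_root_of_unity zeta : root_of_unity_in L zeta -> angle zeta = 1.
Proof.
case=> _ [m [m_gt0 zeta_m]]; apply: angleE.
by have := is_angle_pi_root_unit 0 m_gt0 zeta_m (one_unit1 Habs); rewrite expr0z mul1r mulr1.
Qed.

Lemma angle_one_unit u : one_unit abs u -> angle u = u.
Proof. by move=> u1; apply: angleE; split=> //; exists 1%N, 0; rewrite expr0z mul1r. Qed.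

Lemma angle_values : values_in_one_units abs L angle.
Proof.
by move=> x xL x_neq0; have [w xw] := is_angle_exists xL x_neq0; rewrite (angleE xw); case: xw.
Qed.

Lemma angle_char : char_Lplus L angle.
Proof.
split=> [x xL x_neq0|x y xL yL x_neq0 y_neq0|]; last exact: angle_root_of_unity.
  exact/(one_unit_neq0 Habs)/angle_values.
have [w xw] := is_angle_exists xL x_neq0; have [v yv] := is_angle_exists yL y_neq0.
by rewrite (angleE xw) (angleE yv) (angleE (is_angleM xw yv)).
Qed.

Lemma angle_in_S : in_S abs p L angle.
Proof.
split; first exact: angle_char.
exists (fun n => (0 < n)%N : nat); split; first exact: Zp_elt_one.
move=> u [_ u1] e e_gt0; exists 1%N => -[|n] // _.
by rewrite angle_one_unit // expr1 subrr abs0.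
Qed.

Lemma angle_extends : extends_angle abs K pi angle.
Proof.
move=> _ n zeta u _ [_ [m [m_gt0 zeta_m]]] [_ u1] ->.
exact/angleE/(is_angle_pi_root_unit _ m_gt0).
Qed.

(* The exponent of [s] is forced to be 1 by [s (1 + pi) = 1 + pi]. *)
Lemma in_S_extends_one_unit s : in_S abs p L s -> extends_angle abs K pi s ->
  forall u, one_unit_in abs L u -> s u = u.
Proof.
move=> [_ [y [y_Zp y_pow]]] s_ext u [uL u1].
have fix_one_units v : v \in K -> one_unit abs v -> s v = v.
  move=> vK v1; apply: (s_ext v 0 1 v vK) => //; first exact/root_of_unity_in1/rpred1.
  by rewrite expr0z !mul1r.
have pi1K : 1 + pi \in K by rewrite rpredD ?rpred1.
have pi1 : one_unit abs (1 + pi) by rewrite /one_unit (addrC 1) addrK.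
have y1 := Zp_elt_pow_fixed Habs p_prime pC pi_neq0 pi_lt1 y_Zp.
have /y1 {}y1 : padic_pow_is abs (1 + pi) y (1 + pi).
  by rewrite -{2}(fix_one_units _ pi1K pi1); apply: y_pow; split=> //; exact: KL.
have [//|su_neq] := eqVneq (s u) u.
have dist_gt0 : 0 < abs (u - s u) by rewrite (abs_gt0 Habs) subr_eq0 eq_sym.
have [N0 N0_close] := y_pow u (conj uL u1) _ dist_gt0.
by have := N0_close N0.+1 (leqnSn _); rewrite y1 // expr1 ltxx.
Qed.

Lemma char_Lplus_expr s x n : char_Lplus L s -> x \in L -> x != 0 ->
  s (x ^+ n) = s x ^+ n.
Proof.
move=> [_ sM s_roots] xL x_neq0; elim: n => [|n IH].
  by rewrite !expr0 s_roots //; exact/root_of_unity_in1/rpred1.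
by rewrite !exprS sM ?IH ?rpredX ?expf_neq0.
Qed.

Lemma angle_unique s : in_S abs p L s -> extends_angle abs K pi s ->
  values_in_one_units abs L s -> forall x, x \in L -> x != 0 -> s x = angle x.
Proof.
move=> sS s_ext s1 x xL x_neq0; have [w xw] := is_angle_exists xL x_neq0.
rewrite (angleE xw); have [w1 [N [k [N_gt0 xN]]]] := xw.
have piK : pi ^ k \in K by exact: rpredXz.
have wN_L : w ^+ N \in L.
  have -> : w ^+ N = x ^+ N / pi ^ k by rewrite xN mulrC mulKf ?expfz_neq0.
  by apply: rpred_div; [exact: rpredX | exact: KL].
have s_pi : s (pi ^ k) = 1.
  apply: (s_ext _ k 1 1 piK); rewrite ?mulr1 //; first exact/root_of_unity_in1/rpred1.
  by split; [exact: rpred1 | exact: one_unit1].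
have s_wN : s (w ^+ N) = w ^+ N.
  by apply: (in_S_extends_one_unit sS s_ext); split=> //; exact: one_unitX.
apply: (one_unit_expr_inj Habs p_prime pC N_gt0 (s1 x xL x_neq0) w1).
have [s_char _] := sS; rewrite -(char_Lplus_expr N s_char xL x_neq0) xN.
have [_ sM _] := s_char; rewrite sM ?s_pi ?s_wN ?mul1r ?expfz_neq0 //; first exact: KL.
by rewrite expf_neq0 ?(one_unit_neq0 Habs).
Qed.

End AngleCharacter.

Theorem proposition2p8 (R : realType) (C : closedFieldType) (abs : C -> R)
    (p : nat) (K L : {pred C}) (pi : C) :
  prime p -> p \in [pchar C] ->
  nonarch_abs abs ->
  local_field_with_unif abs K pi ->
  completed_alg_closure abs K ->
  finite_ext K L ->
  exists s : C -> C,
    [/\ in_S abs p L s, extends_angle abs K pi s, values_in_one_units abs L s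
      & forall s' : C -> C,
          in_S abs p L s' -> extends_angle abs K pi s' ->
          values_in_one_units abs L s' ->
          forall x, x \in L -> x != 0 -> s' x = s x].
Proof.
move=> p_prime pC Habs K_local _ L_finite.
exists (angle abs pi); split.
- exact: (angle_in_S Habs p_prime pC K_local L_finite).
- exact: (angle_extends Habs p_prime pC K_local).
- exact: (angle_values Habs p_prime pC K_local L_finite).
- exact: (angle_unique Habs p_prime pC K_local L_finite).
Qed.
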